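(* For every prime $p$: (i) $\{(r,e,d)\in\mathscr{U}(p)\mid p\mid r,\ \det M_d((x^r-x-1)^e)\ne0\}=\{(r,e,d)\in\mathscr{B}(p)\mid p\mid r\}$; (ii) $\{(r,e,d)\in\mathscr{U}(p)\mid p<r,\ p\nmid r,\ \det M_d((x^r-1)^e)\ne0\}=\{(r,e,d)\in\mathscr{B}(p)\mid p<r,\ p\nmid r\}$; (iii) $\{(r,e,d)\in\mathscr{U}(p)\mid 2\le r\le p-1,\ r\nmid p-1,\ \det M_d((x^r-1)^e)\ne0\}=\{(r,e,d)\in\mathscr{B}(p)\mid 2\le r\le p-1,\ r\nmid p-1\}$.
   Context: Let $p$ be a prime. For a polynomial $h(x)\in\mathbb{F}_p[x]$ and integers $e\ge0$, $0\le d\le p$, write $h(x)^e=\sum_{i\ge0}c_ix^i$ ($c_i=0$ for $i<0$) and let $M_d(h(x)^e)$ be the $d\times d$ matrix with $(i,j)$ entry $c_{ip+j-d-1}$; in particular $M_d((x^r-1)^e)$, $M_d((x^r-x-1)^e)$ are these matrices for $h=x^r-1$, $h=x^r-x-1$. For integer triples put $g=\left\{red-\frac{d(d+1)}{2}(p-1)\right\}\big/\frac{r(r-1)}{2}\in\mathbb{Q}$. $\mathscr{U}(p)$ is the set of integer triples $(r,e,d)$ with $r\ge2$, $e\ge1$, $1\le d\le p$, $d(p-1)\le re\le r(p-1)$, $g>0$, and $g\in2\mathbb{Z}$ if $p\ne2$, $g\in\mathbb{Z}$ if $p=2$. $\mathscr{B}(p)=\mathscr{B}_+(p)\cup\mathscr{B}_0(p)\cup\mathscr{B}_-(p)$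 where $\mathscr{B}_+(p)=\{(r,e,d): 2\le r\le p,\ e=p-1,\ d=r\}$, $\mathscr{B}_0(p)=\{(r,e,d): 2\le r\le p+1,\ (p-1)/2<e\le p-1,\ r(p-1-e)\le p-1,\ d=r-1\}$, $\mathscr{B}_-(p)=\{(r,e,d): r\ge2,\ (p-1)/2<e\le p-1,\ r(p-1-e)=p-1,\ d=r-2\}$ (integer triples). *)

From HB Require Import structures.
From mathcomp Require Import all_boot all_order all_algebra.
Set Implicit Arguments. Unset Strict Implicit. Unset Printing Implicit Defensive.
Import Order.TTheory GRing.Theory Num.Theory.
Local Open Scope ring_scope.

Definition coefz (R : nzRingType) (q : {poly R}) (k : int) : R :=
  if k < 0 then 0 else q`_(absz k).

(* M_d(h^e): the d x d matrix whose (i,j) entry (1-indexed) is c_{ip+j-d-1};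
   with 0-indexed i, j this is c_{(i+1)p + (j+1) - d - 1}. *)
Definition Mmat (p : nat) (h : {poly 'F_p}) (e d : nat) : 'M['F_p]_d :=
  \matrix_(i < d, j < d)
    coefz (h ^+ e) (((i.+1 * p)%N)%:Z + (j.+1)%:Z - d%:Z - 1).

Definition gval (p : nat) (r e d : int) : rat :=
  (r%:~R * e%:~R * d%:~R - d%:~R * (d%:~R + 1) / 2%:R * (p%:R - 1))
  / (r%:~R * (r%:~R - 1) / 2%:R).

Definition inU (p : nat) (r e d : int) : Prop :=
  [/\ 2 <= r, 1 <= e, 1 <= d <= p%:Z &
      d * (p%:Z - 1) <= r * e <= r * (p%:Z - 1)] /\
  0 < gval p r e d /\
      (if p != 2%N then gval p r e d / 2%:R \is a Num.int
       else gval p r e d \is a Num.int).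

(* (p-1)/2 < e  is written as  p - 1 < 2 e  (equivalent over Z). *)
Definition inBplus (p : nat) (r e d : int) : Prop :=
  [/\ 2 <= r <= p%:Z, e = p%:Z - 1 & d = r].
Definition inB0 (p : nat) (r e d : int) : Prop :=
  [/\ 2 <= r <= p%:Z + 1, p%:Z - 1 < 2 * e, e <= p%:Z - 1,
      r * (p%:Z - 1 - e) <= p%:Z - 1 & d = r - 1].
Definition inBminus (p : nat) (r e d : int) : Prop :=
  [/\ 2 <= r, p%:Z - 1 < 2 * e, e <= p%:Z - 1,
      r * (p%:Z - 1 - e) = p%:Z - 1 & d = r - 2].
Definition inB (p : nat) (r e d : int) : Prop :=
  inBplus p r e d \/ inB0 p r e d \/ inBminus p r e d.

Definition polyXr1 (p : nat) (r : int) : {poly 'F_p} := 'X^(absz r) - 1.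
Definition polyXrX1 (p : nat) (r : int) : {poly 'F_p} := 'X^(absz r) - 'X - 1.

From HB Require Import structures.
From mathcomp Require Import all_boot all_order all_algebra perm.
From mathcomp Require Import zify ring lra.
Import Order.TTheory GRing.Theory Num.Theory.
Set Implicit Arguments. Unset Strict Implicit. Unset Printing Implicit Defensive.

(* For e < p the coefficients of (x^r - 1)^e are, up to sign, the binomials
   C(e, k), all nonzero mod p, sitting at the exponents r k.  Hence when d <= r
   every row of M_d((x^r - 1)^e) has at most one nonzero entry, and row i has one
   iff some r k with k <= e lies in the window [i p - d, i p); when moreover p
   and r are coprime, distinct rows use distinct columns, so the determinant is
   nonzero iff every window is hit.  For r > p this forces (r, e, d) =
   (p + 1, p - 1, p); for r < p and d <= r - 2, the map i |-> i p mod r would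
   permute [1, d], which forces p = 1 mod r.  For x^r - x - 1 with p | r, the
   binomial expansion of (x^r - x - 1)^e splits into blocks x^(r k) (-(x + 1))^(e - k):
   if r >= 2 p the second row of the matrix only sees a gap between blocks, and
   if r = p the matrix is anti-triangular with anti-diagonal entries +-C(p - 1, i).
   The conditions defining U(p) (d (p - 1) <= r e, g a positive integer) then
   determine e and d. *)

Lemma prime_ndvd_fact p n : prime p -> n < p -> ~~ (p %| n`!).
Proof.
move=> p_pr; elim: n => [|n IHn] lt_np; first by rewrite dvdn1 neq_ltn prime_gt1 ?orbT.
by rewrite factS Euclid_dvdM // negb_or IHn ?gtnNdvd // ltnW.
Qed.

Lemma coprime_mul_modn_inj a r i i' : coprime a r -> i < r -> i' < r ->
  i * a = i' * a %[mod r] -> i = i'.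
Proof.
move=> co_ar lt_ir lt_i'r; wlog le_ii' : i i' lt_ir lt_i'r / i <= i' => [W|].
  have [le_ii' | /ltnW le_i'i] := leqP i i'; first exact: W.
  by move/esym/(W _ _ lt_i'r lt_ir le_i'i)->.
move/eqP; rewrite eq_sym eqn_mod_dvd ?leq_mul2r ?le_ii' ?orbT //.
rewrite -mulnBl Gauss_dvdl 1?coprime_sym //.
have [lt_ii' | ?] := ltnP i i'; last lia.
by move/dvdn_leq; rewrite subn_gt0 => /(_ lt_ii'); lia.
Qed.

Lemma edivn_quo_unique r k k' a b : a < r -> b < r -> r * k + a = r * k' + b -> k = k'.
Proof.
move=> lt_ar lt_br /(congr1 (divn^~ r)); have r_gt0 : 0 < r by lia.
by rewrite !(mulnC r) !divnMDl // !divn_small // !addn0.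
Qed.

(* Row [i] (counted from 1) of [Mmat ('X^r - 1) e d] has a nonzero entry
   exactly when this holds. *)
Definition window_hit (p r e d i : nat) : bool :=
  [exists k : 'I_e.+1, i * p - d <= r * k < i * p].

Lemma window_hits_gt p r e d : 1 < p -> p < r -> 0 < d <= p -> e <= p.-1 ->
  (forall i, 0 < i <= d -> window_hit p r e d i) -> [/\ d = p, r = p.+1 & e = p.-1].
Proof.
move=> p_gt1 lt_pr /andP[d_gt0 le_dp] le_ep1 hits.
have d_eq : d = p.
  have /existsP[[[|k] /= _] /andP[lo hi]] := hits 1 d_gt0; first lia.
  have : r <= r * k.+1 by rewrite leq_pmulr.
  lia.
subst d.
(* Consecutive windows are disjoint, so their witnesses strictly increase. *)
have k_ge i k : 0 < i <= p -> i * p - p <= r * k < i * p -> i.-1 <= k.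
  elim: i k => [//|[//|i] IHi] k /andP[_ le_ip] /andP[lo _].
  have /existsP[k' /andP[lo' hi']] := hits i.+1 (ltnW le_ip).
  have := IHi k' (ltnW le_ip); rewrite lo' hi' => /(_ isT).
  have : r * k' < r * k by lia.
  rewrite ltn_pmul2l; lia.
have p_in : 0 < p <= p by rewrite leqnn andbT ltnW.
have /existsP[k /andP[lo hi]] := hits p p_in.
have := k_ge p k p_in; rewrite lo hi => /(_ isT) le_p1k.
have k_eq : nat_of_ord k = p.-1 by have := ltn_ord k; lia.
rewrite k_eq in hi; split=> //; last by have := ltn_ord k; lia.
nia.
Qed.

Lemma modn_mul_window_onto a r d : coprime a r -> d < r ->
  (forall i, 0 < i <= d -> 0 < (i * a) %% r <= d) ->
  forall t, 0 < t <= d -> exists2 i, 0 < i <= d & (i * a) %% r = t.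
Proof.
move=> co_ar lt_dr inw.
have lt_f (i : 'I_d) : ((i.+1 * a) %% r).-1 < d by have := inw i.+1 (ltn_ord i); lia.
pose f i := Ordinal (lt_f i).
have f_inj : injective f.
  move=> i i' /(congr1 val) /= fE; apply: val_inj; apply: succn_inj => /=.
  have := ltn_ord i; have := ltn_ord i' => lt_i'd lt_id.
  apply: (coprime_mul_modn_inj co_ar); [lia | lia |].
  by have := inw i.+1 (ltn_ord i); have := inw i'.+1 (ltn_ord i'); lia.
have [g _ gK] := injF_bij f_inj; move=> t t_in; have lt_t : t.-1 < d by lia.
exists (g (Ordinal lt_t)).+1; first by rewrite /= ltn_ord.
have := inw (g (Ordinal lt_t)).+1 (ltn_ord _).
by have /(congr1 val) /= := gK (Ordinal lt_t); lia.
Qed.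

(* If [b := a mod r] is not 1, the preimage [y] of 1 under [i |-> i a mod r]
   gives [s + b = r + 1] with [s := (y - 1) a mod r], and the preimage [z] of
   [r - b] then satisfies [r %| (z + 1) a]. *)
Lemma modn_mul_window_eq1 a r d : coprime a r -> 0 < d -> d.+2 <= r ->
  (forall i, 0 < i <= d -> 0 < (i * a) %% r <= d) -> a %% r = 1.
Proof.
move=> co_ar d_gt0 le_d2r inw.
have onto := modn_mul_window_onto co_ar (ltnW le_d2r) inw.
move bE: (a %% r) => b; have [//|b_neq1] := eqVneq b 1; exfalso.
have [y y_in yE] := onto 1 d_gt0.
have y_gt1 : 1 < y.
  rewrite ltn_neqAle eq_sym; case/andP: y_in => -> _; rewrite andbT.
  by apply: contra_neq b_neq1 => y1; rewrite -bE -yE y1 mul1n.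
have b_in : 0 < b <= d by have := inw 1 d_gt0; rewrite mul1n bE.
have y1_in : 0 < y.-1 <= d by lia.
have sbE : ((y.-1 * a) %% r + b) %% r = 1 by rewrite -bE modnDm -mulSnr prednK ?yE //; lia.
move: sbE (inw y.-1 y1_in); move: ((y.-1 * a) %% r) => s sbE s_in.
have {sbE} sb_eq : s + b = r.+1.
  have [lt_sbr | le_rsb] := ltnP (s + b) r; first by move: sbE; rewrite modn_small //; lia.
  by move: sbE; rewrite -(subnK le_rsb) modnDr modn_small; lia.
have rb_in : 0 < r - b <= d by lia.
have [z z_in zE] := onto (r - b) rb_in.
have : (z.+1 * a) %% r = 0 by rewrite mulSn -modnDm zE bE subnKC ?modnn //; lia.
move/eqP; rewrite -/(dvdn r _) Gauss_dvdl; last by rewrite coprime_sym.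
by apply/negP; rewrite gtnNdvd // (leq_trans _ le_d2r) //; case/andP: z_in.
Qed.

Lemma window_hit_modn p r e d i : d < r -> window_hit p r e d i -> 0 < (i * p) %% r <= d.
Proof.
move=> lt_dr /existsP[k /andP[lo hi]].
by rewrite -(subnKC (ltnW hi)) mulnC modnMDl modn_small; lia.
Qed.

Lemma window_hits_lt p r e d : prime p -> 1 < r < p -> ~~ (r %| p.-1) ->
  0 < d <= r -> e <= p.-1 -> (forall i, 0 < i <= d -> window_hit p r e d i) ->
  (d = r /\ e = p.-1) \/ (d = r.-1 /\ r * (p.-1 - e) <= p.-1).
Proof.
move=> p_pr /andP[r_gt1 lt_rp] r_ndvd /andP[d_gt0 le_dr] le_ep1 hits.
have [lt_dr1 | ge_dr1] := ltnP d r.-1.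
  have co_pr : coprime p r by rewrite prime_coprime // gtnNdvd //; lia.
  have p_mod : p %% r = 1.
    apply: (modn_mul_window_eq1 co_pr d_gt0); first lia.
    by move=> i /hits /window_hit_modn; apply; lia.
  by case/negP: r_ndvd; rewrite (divn_eq p r) p_mod addn1 /= dvdn_mull.
have d_in : 0 < d <= d by rewrite d_gt0 leqnn.
have /existsP[k /andP[lo _]] := hits d d_in.
have le_ke : k <= e by rewrite -ltnS ltn_ord.
have le_rkre : r * k <= r * e by rewrite leq_mul2l le_ke orbT.
have [d_eq | d_neq] := eqVneq d r.
  left; split=> //; subst d.
  have : r * p.-1 <= r * k by rewrite -subn1 mulnBr muln1; lia.
  by rewrite leq_pmul2l; lia.
right; split; first lia.
by rewrite mulnBr -!subn1 mulnBr muln1; nia.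
Qed.

Lemma window_hit_pred_div p r e d i : 0 < i * p ->
  (i * p).-1 %/ r <= e -> (i * p).-1 %% r < d -> window_hit p r e d i.
Proof.
move=> ip_gt0 le_qe lt_md; apply/existsP; exists (Ordinal (le_qe : _ < e.+1)) => /=.
rewrite [r * _]mulnC; have := divn_eq (i * p).-1 r.
by move: ((i * p).-1 %/ r) ((i * p).-1 %% r) lt_md => q m; lia.
Qed.

Lemma window_hits_coprime p r e d : coprime p r -> 0 < p -> d <= r <= d.+1 ->
  d * p <= r * e.+1 -> forall i, 0 < i <= d -> window_hit p r e d i.
Proof.
move=> co_pr p_gt0 /andP[le_dr le_rd1] le_dp i /andP[i_gt0 le_id].
have ip_gt0 : 0 < i * p by rewrite muln_gt0 i_gt0.
have r_gt0 : 0 < r by lia.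
apply: window_hit_pred_div => //.
  rewrite -ltnS ltn_divLR //.
  have : i * p <= d * p by rewrite leq_mul2r le_id orbT.
  lia.
have [-> | d_neq] := eqVneq d r; first by rewrite ltn_mod.
have lt_ir : i < r by rewrite (leq_ltn_trans le_id) // ltn_neqAle d_neq.
have r_ndvd : ~~ (r %| i * p) by rewrite Gauss_dvdl 1?coprime_sym // gtnNdvd.
have := ltn_pmod (i * p).-1 r_gt0; have := divn_eq (i * p).-1 r.
move: ((i * p).-1 %/ r) ((i * p).-1 %% r) => q m ipE lt_mr.
by rewrite ltnNge; apply: contra r_ndvd => le_dm; apply/dvdnP; exists q.+1; lia.
Qed.

(* For [e < r], the index ranges [[r k, r k + (e - k)]] of the terms of the
   expansion [coef_XrX1_exp] are pairwise disjoint. *)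
Lemma XrX1_blocks_disjoint r e k k' : e < r -> k <= e -> k' <= e ->
  r * k' <= r * k + (e - k) <= r * k' + (e - k') -> k = k'.
Proof.
move=> lt_er le_ke le_k'e /andP[lo hi]; case: (ltngtP k k') => // [lt_kk' | lt_k'k].
  have : r * k.+1 <= r * k' by rewrite leq_mul2l lt_kk' orbT.
  lia.
have : r * k'.+1 <= r * k by rewrite leq_mul2l lt_k'k orbT.
lia.
Qed.

Local Open Scope ring_scope.

Lemma det_row_eq0 (R : comNzRingType) n (A : 'M[R]_n) i :
  (forall j, A i j = 0) -> \det A = 0.
Proof. by move=> Ai0; rewrite (expand_det_row A i) big1 // => j _; rewrite Ai0 mul0r. Qed.

Lemma det_perm_pattern_neq0 (R : idomainType) n (A : 'M[R]_n) :
  (forall i, exists j, A i j != 0) ->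
  (forall i j j', A i j != 0 -> A i j' != 0 -> j = j') ->
  (forall i i' j, A i j != 0 -> A i' j != 0 -> i = i') ->
  \det A != 0.
Proof.
move=> row_nz row_uniq col_uniq.
have /all_sig[f Af] : forall i, {j | A i j != 0} by move=> i; apply/sigW/row_nz.
have f_inj : injective f by move=> i i' fii'; apply: (col_uniq _ _ (f i)); rewrite // fii'.
rewrite /determinant (bigD1 (perm f_inj)) //= [X in _ + X]big1 ?addr0 => [|s s_neq].
  by rewrite mulf_neq0 ?signr_eq0 //; apply/prodf_neq0 => i _; rewrite permE.
have [i si] : exists i, s i != f i.
  apply/existsP; move: s_neq; apply: contraNT => /existsPn sf.
  by apply/eqP/permP => i; rewrite permE; apply/eqP/negPn/sf.
rewrite (bigD1 i) //= (_ : A i (s i) = 0) ?mul0r ?mulr0 //.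
by apply: contraNeq si => Ais; apply/eqP/(row_uniq i).
Qed.

Lemma det_antitrig_neq0 (R : idomainType) n (A : 'M[R]_n) :
  (forall i j : 'I_n, (n <= i + j)%N -> A i j = 0) ->
  (forall i : 'I_n, A i (rev_ord i) != 0) -> \det A != 0.
Proof.
move=> A_hi A_anti; pose s : 'S_n := perm (@rev_ord_inj n).
have : \det (row_perm s A) != 0.
  rewrite det_trig; last first.
    by apply/is_trig_mxP => i j lt_ij; rewrite mxE permE A_hi //=; have := ltn_ord i; lia.
  by apply/prodf_neq0 => i _; rewrite mxE permE -{2}(rev_ordK i) A_anti.
by rewrite row_permE det_mulmx det_perm mulf_eq0 negb_or => /andP[].
Qed.

Lemma bin_Fp_neq0 p e k : prime p -> (e < p)%N -> (k <= e)%N -> ('C(e, k)%:R : 'F_p) != 0.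
Proof.
move=> p_pr lt_ep le_ke; rewrite -(dvdn_pcharf (pchar_Fp p_pr)).
by apply: contraNN (prime_ndvd_fact p_pr lt_ep); rewrite -(bin_fact le_ke) => /dvdn_mulr->.
Qed.

Lemma MmatE p (h : {poly 'F_p}) e d (i j : 'I_d) :
  Mmat h e d i j =
  if (d <= i.+1 * p + j)%N then (h ^+ e)`_(i.+1 * p + j - d) else 0.
Proof.
rewrite /Mmat mxE /coefz; case: leqP => [le_d | lt_d].
  by rewrite ifF; [congr (_ `_ _); lia | apply/negbTE; rewrite -leNgt; lia].
by rewrite ifT //; lia.
Qed.

Lemma coef_Xr1_exp (R : comNzRingType) r e n : (0 < r)%N ->
  (('X^r - 1 : {poly R}) ^+ e)`_n =
  if (r %| n)%N then (-1) ^+ (e - n %/ r) *+ 'C(e, n %/ r) else 0.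
Proof.
move=> r_gt0; rewrite addrC exprDn coef_sum.
under eq_bigr => k _ do
  rewrite -exprM coefMn -polyC1 -polyCN -polyC_exp coefCM coefXn.
case: dvdnP => [[m ->]|ndvd]; last first.
  rewrite big1 // => k _; case: eqP => [nk|]; last by rewrite mulr0 mul0rn.
  by case: ndvd; exists k; rewrite nk mulnC.
rewrite mulnK //; have [le_me|lt_em] := leqP m e; last first.
  rewrite bin_small // big1 // => k _.
  by rewrite mulnC eqn_mul2l (gtn_eqF r_gt0) /= gtn_eqF ?mulr0 ?mul0rn // (leq_trans _ lt_em).
rewrite (bigD1 (Ordinal (le_me : (m < e.+1)%N))) //= mulnC eqxx mulr1 big1 ?addr0 // => k.
move=> /eqP k_neq; rewrite eqn_mul2l (gtn_eqF r_gt0) /=.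
by case: eqP => [mk|]; [case: k_neq; apply: val_inj | rewrite mulr0 mul0rn].
Qed.

Lemma Mmat_Xr1_neq0 p r e d (i j : 'I_d) : prime p -> (0 < r)%N -> (e < p)%N ->
  (Mmat ('X^r - 1 : {poly 'F_p}) e d i j != 0) =
  [exists k : 'I_e.+1, i.+1 * p + j == r * k + d]%N.
Proof.
move=> p_pr r_gt0 lt_ep; rewrite MmatE; case: leqP => [le_d | lt_d]; last first.
  by rewrite eqxx; apply/esym/existsP => -[k /eqP]; lia.
have shiftE k : (i.+1 * p + j == r * k + d)%N = (i.+1 * p + j - d == r * k)%N.
  by apply/eqP/eqP; lia.
rewrite coef_Xr1_exp //; case: dvdnP => [[m nE] | ndvd]; last first.
  rewrite eqxx; apply/esym/existsP => -[k]; rewrite shiftE => /eqP nE.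
  by case: ndvd; exists k; rewrite nE mulnC.
rewrite nE mulnK // -mulr_natr mulf_eq0 signr_eq0 /=.
apply/idP/existsP => [nz | [k]].
  have le_me : (m <= e)%N by apply: contraNT nz; rewrite -ltnNge => /bin_small->.
  by exists (Ordinal (le_me : (m < e.+1)%N)); rewrite shiftE nE mulnC.
rewrite shiftE nE mulnC eqn_mul2l (gtn_eqF r_gt0) => /eqP->.
exact: bin_Fp_neq0 p_pr lt_ep (ltn_ord k).
Qed.

Lemma det_Mmat_Xr1_neq0 p r e d :
  prime p -> (0 < r)%N -> (e < p)%N -> (d <= r)%N -> coprime p r ->
  \det (Mmat ('X^r - 1 : {poly 'F_p}) e d) != 0 <->
  (forall i, 0 < i <= d -> window_hit p r e d i)%N.
Proof.
move=> p_pr r_gt0 lt_ep le_dr co_pr; set A := Mmat _ e d.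
have A_nz := Mmat_Xr1_neq0 _ _ p_pr r_gt0 lt_ep.
have hitE (i : 'I_d) : window_hit p r e d i.+1 = [exists j, A i j != 0].
  apply/existsP/existsP => [[k /andP[lo hi]] | [j]].
    have lt_jd : (r * k + d - i.+1 * p < d)%N by lia.
    by exists (Ordinal lt_jd); rewrite A_nz; apply/existsP; exists k; apply/eqP => /=; lia.
  by rewrite A_nz => /existsP[k /eqP jE]; exists k; have := ltn_ord j; lia.
split=> [detA i /andP[i_gt0 le_id] | hits].
  have lt_id : (i.-1 < d)%N by lia.
  rewrite -(prednK i_gt0) (hitE (Ordinal lt_id)); apply: contraTT detA => /existsPn A0.
  by rewrite negbK; apply/eqP/(det_row_eq0 (i := Ordinal lt_id)) => j; apply/eqP/negbNE/A0.
apply: det_perm_pattern_neq0 => [i | i j j' | i i' j].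
- by apply/existsP; rewrite -hitE hits /=.
- rewrite !A_nz => /existsP[k /eqP jE] /existsP[k' /eqP j'E]; apply: val_inj => /=.
  have := ltn_ord j; have := ltn_ord j' => lt_j'd lt_jd.
  have kk' : nat_of_ord k = k' by apply: (@edivn_quo_unique r _ _ (d - j.+1) (d - j'.+1)); lia.
  lia.
- rewrite !A_nz => /existsP[k /eqP iE] /existsP[k' /eqP i'E]; apply: val_inj => /=.
  have := ltn_ord i; have := ltn_ord i' => lt_i'd lt_id.
  apply: (coprime_mul_modn_inj co_pr); [lia | lia |].
  by rewrite -(modnMDl k' (i * p)) -(modnMDl k (i' * p)); congr (_ %% r)%N; lia.
Qed.

Lemma size_exp_oppXadd1 (R : nzRingType) m : size ((- ('X + 1) : {poly R}) ^+ m) = m.+1.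
Proof. by rewrite exprNn size_Msign -[1]opprK -polyC1 -polyCN size_exp_XsubC. Qed.

Lemma coef_exp_oppXadd1 (R : nzRingType) m : ((- ('X + 1) : {poly R}) ^+ m)`_m = (-1) ^+ m.
Proof.
have sizeE : size (('X + 1 : {poly R}) ^+ m) = m.+1.
  by rewrite -[1]opprK -polyC1 -polyCN size_exp_XsubC.
have /monicP : ('X + 1 : {poly R}) ^+ m \is monic by rewrite monic_exp // -polyC1 monicXaddC.
have signE : ((-1) ^+ m : {poly R}) = ((-1) ^+ m)%:P by rewrite polyC_exp polyCN polyC1.
by rewrite (exprNn ('X + 1)) signE coefCM lead_coefE sizeE => ->; rewrite mulr1.
Qed.

Lemma coef_XrX1_exp (R : comNzRingType) r e n :
  (('X^r - 'X - 1 : {poly R}) ^+ e)`_n =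
  \sum_(k < e.+1)
    (if (r * k <= n)%N then ((- ('X + 1)) ^+ (e - k))`_(n - r * k) else 0) *+ 'C(e, k).
Proof.
rewrite -addrA -opprD addrC exprDn coef_sum; apply: eq_bigr => k _.
by rewrite coefMn -exprM coefMXn; case: ltnP.
Qed.

Lemma coef_XrX1_exp_eq0 (R : comNzRingType) r e n :
  (forall k, k <= e -> r * k <= n -> r * k + (e - k) < n)%N ->
  (('X^r - 'X - 1 : {poly R}) ^+ e)`_n = 0.
Proof.
move=> gap; rewrite coef_XrX1_exp big1 // => k _; case: ifP => [le_rkn|]; last by rewrite mul0rn.
by rewrite nth_default ?mul0rn // size_exp_oppXadd1; have := gap k (ltn_ord k) le_rkn; lia.
Qed.

Lemma coef_XrX1_exp_block (R : comNzRingType) r e k : (e < r)%N -> (k <= e)%N ->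
  (('X^r - 'X - 1 : {poly R}) ^+ e)`_(r * k + (e - k)) = (-1) ^+ (e - k) *+ 'C(e, k).
Proof.
move=> lt_er le_ke; rewrite coef_XrX1_exp (bigD1 (Ordinal (le_ke : (k < e.+1)%N))) //=.
rewrite leq_addr addKn coef_exp_oppXadd1 big1 ?addr0 // => k' /eqP k'_neq.
case: ifP => [le_rk'|]; last by rewrite mul0rn.
rewrite nth_default ?mul0rn // size_exp_oppXadd1 ltnNge; apply/negP => hi.
apply: k'_neq; apply/val_inj/esym/(XrX1_blocks_disjoint lt_er le_ke) => /=.
  by have := ltn_ord k'; lia.
lia.
Qed.

(* Entry [(i, j)] is the coefficient of index [p i + (p - 1 - i) + (i + j + 1 - d)]:
   for [i + j >= d] it falls in the gap after block [i], and on the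
   anti-diagonal it is the top of block [i]. *)
Lemma det_Mmat_XpX1_neq0 p d : prime p -> (d <= p)%N ->
  \det (Mmat ('X^p - 'X - 1 : {poly 'F_p}) p.-1 d) != 0.
Proof.
move=> p_pr le_dp; have p_gt0 := prime_gt0 p_pr.
apply: det_antitrig_neq0 => [i j le_d_ij | i].
  rewrite MmatE; case: leqP => // _; apply: coef_XrX1_exp_eq0 => k le_k lo.
  have := ltn_ord j => lt_jd.
  have lt_ki : (k < i.+1)%N by rewrite -(ltn_pmul2l p_gt0); lia.
  have : (i - k <= p * (i - k))%N by rewrite leq_pmull.
  rewrite mulnBr; nia.
rewrite MmatE /= ifT; last by have := ltn_ord i; have := leq_pmulr i.+1 p_gt0; lia.
have -> : (i.+1 * p + (d - i.+1) - d = p * i + (p.-1 - i))%N by have := ltn_ord i; lia.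
have lt_p1p : (p.-1 < p)%N by lia.
have le_ip1 : (i <= p.-1)%N by have := ltn_ord i; lia.
by rewrite coef_XrX1_exp_block // -mulr_natr mulf_neq0 ?signr_eq0 ?bin_Fp_neq0.
Qed.

(* The second row only sees coefficients of index in [[p, 2 p)], between
   blocks 0 and 1. *)
Lemma det_Mmat_XrX1_eq0 p r e d : (2 * p <= r)%N -> (e < p)%N -> (1 < d <= p)%N ->
  \det (Mmat ('X^r - 'X - 1 : {poly 'F_p}) e d) = 0.
Proof.
move=> le_2pr lt_ep /andP[lt_1d le_dp]; apply: (det_row_eq0 (i := Ordinal lt_1d)) => j.
rewrite MmatE /=; case: leqP => // _; apply: coef_XrX1_exp_eq0 => -[|k] _ lo; first lia.
have : (r <= r * k.+1)%N by rewrite leq_pmulr.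
by have := ltn_ord j; lia.
Qed.

Lemma gvalE p (r e d g : int) : 1 < r ->
  (gval p r e d == g%:~R) = (g * (r * (r - 1)) == 2 * r * e * d - d * (d + 1) * (p%:Z - 1)).
Proof.
move=> r_gt1; have rr_neq0 : (r * (r - 1))%:~R != 0 :> rat by rewrite intr_eq0; apply/eqP; nia.
rewrite /gval -(eqr_int rat) -(inj_eq (mulIf rr_neq0)) -[2%:R]/(2%:~R).
rewrite !(rmorphM, rmorphB, rmorphD) /= -[p%:R]/(p%:Z%:~R) !rmorph1.
have /andP[r_neq0 r1_neq0] : (r%:~R != 0 :> rat) && (r%:~R - 1 != 0 :> rat).
  by move: rr_neq0; rewrite rmorphM rmorphB /= mulf_eq0 negb_or.
by apply/eqP/eqP => [<- | ->]; field; rewrite r1_neq0 r_neq0.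
Qed.

Lemma inU_gval p r e d : inU p r e d ->
  exists2 g : int, 0 < g & g * (r * (r - 1)) = 2 * r * e * d - d * (d + 1) * (p%:Z - 1).
Proof.
case=> [[r_ge2 _ _ _] [gval_gt0 gval_int]].
have [g gE] : exists g : int, gval p r e d = g%:~R.
  move: gval_int; case: ifP => _ /intrP[g gE]; last by exists g.
  by exists (g * 2); rewrite rmorphM /= -gE mulfVK.
exists g; first by rewrite -(ltr0z rat) -gE.
by apply/eqP; rewrite -gvalE ?gE //; lia.
Qed.

Lemma inU_intro p r e d (g : int) :
  [/\ 2 <= r, 1 <= e, 1 <= d <= p%:Z & d * (p%:Z - 1) <= r * e <= r * (p%:Z - 1)] ->
  0 < g -> (p != 2%N -> (2 %| g)%Z) ->
  g * (r * (r - 1)) = 2 * r * e * d - d * (d + 1) * (p%:Z - 1) -> inU p r e d.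
Proof.
move=> bounds g_gt0 g_even gE; have [r_ge2 _ _ _] := bounds.
have /eqP gvalg : gval p r e d == g%:~R by rewrite gvalE ?gE //; lia.
split=> //; rewrite gvalg ltr0z; split=> //.
case: ifP => [/g_even /dvdzP[h ->] | _]; last exact: intr_int.
by rewrite rmorphM /= mulfK // intr_int.
Qed.

Lemma inU_bounds p r e d : (1 < p)%N -> inU p r e d ->
  [/\ 1 < r, 0 < e <= p%:Z - 1, 0 < d <= p%:Z & d <= r].
Proof.
move=> p_gt1 [[r_ge2 e_ge1 /andP[d_ge1 le_dp] /andP[lo hi]] _].
have le_ep1 : e <= p%:Z - 1 by rewrite -(ler_pM2l (_ : 0 < r)) //; lia.
have le_dr : d <= r by rewrite -(ler_pM2r (_ : 0 < p%:Z - 1)) //; lia.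
split; lia.
Qed.

Lemma inU_nat p r e d : (1 < p)%N -> inU p r e d -> exists R E D : nat,
  [/\ r = R, e = E, d = D & [/\ 1 < R, 0 < E <= p.-1, 0 < D <= p & D <= R]%N].
Proof.
move=> p_gt1 /(inU_bounds p_gt1) [r_gt1 /andP[e_gt0 le_ep1] /andP[d_gt0 le_dp] le_dr].
by exists `|r|%N, `|e|%N, `|d|%N; split; [lia | lia | lia | split; lia].
Qed.

Lemma inU_d1 p r e : (1 < p)%N -> inU p r e 1 -> r <= 2 * (p%:Z - 1).
Proof.
move=> p_gt1 hU; have [g g_gt0 gE] := inU_gval hU.
have [r_gt1 /andP[_ le_ep1] _ _] := inU_bounds p_gt1 hU.
have le_rg : r * (r - 1) <= g * (r * (r - 1)) by rewrite ler_peMl //; nia.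
have le_re : r * e <= r * (p%:Z - 1) by rewrite ler_pM2l //; lia.
have : (r - 1) * r <= (r - 1) * (2 * (p%:Z - 1)) by nia.
by rewrite ler_pM2l //; lia.
Qed.

Lemma inU_pred_r p r e : inU p r e (r - 1) -> p%:Z - 1 < 2 * e.
Proof.
case=> [[r_ge2 _ _ _] [gval_gt0 _]].
have /eqP gval_pred : gval p r e (r - 1) == (2 * e - (p%:Z - 1))%:~R.
  by rewrite gvalE; [apply/eqP; ring | lia].
by move: gval_gt0; rewrite gval_pred ltr0z; lia.
Qed.

Lemma inU_r_eq_p p (E D : nat) : prime p -> inU p p E D -> E = p.-1 /\ (D = p \/ D = p.-1).
Proof.
move=> p_pr hU; have p_gt1 := prime_gt1 p_pr.
have [_ /andP[E_gt0 le_Ep1] /andP[D_gt0 le_Dp] _] := inU_bounds p_gt1 hU.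
have [g g_gt0 gE] := inU_gval hU.
have /orP[p_D | p_D1] : (p %| D)%N || (p %| D.+1)%N.
  have : (p %| D * D.+1 * p.-1)%N.
    rewrite -[(p %| _)%N]/(p%:Z %| ((D * D.+1 * p.-1)%N)%:Z)%Z.
    rewrite (_ : ((D * D.+1 * p.-1)%N)%:Z = p%:Z * (2 * E%:Z * D%:Z - g * (p%:Z - 1))).
      exact/dvdz_mulr/dvdzz.
    lia.
  by rewrite !Euclid_dvdM // [(p %| p.-1)%N]gtnNdvd ?orbF //; lia.
- have D_eq : D = p by have := dvdn_leq D_gt0 p_D; lia.
  subst D; split; last by left.
  have gE' : g * (p%:Z - 1) = 2 * p%:Z * E - (p%:Z + 1) * (p%:Z - 1).
    by apply: (@mulfI _ p%:Z); [apply/eqP; lia | lia].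
  pose c := g + p%:Z + 1 - 2 * E%:Z.
  have cE : c * (p%:Z - 1) = 2 * E%:Z by rewrite /c; lia.
  have p1_gt0 : 0 < p%:Z - 1 by lia.
  have [c1 | c2] : c = 1 \/ c = 2.
    have : 0 < c by rewrite -(pmulr_lgt0 _ p1_gt0) cE; lia.
    have : c <= 2 by rewrite -(ler_pM2r p1_gt0) cE; lia.
    lia.
  + by rewrite c1 in cE; move: c1; rewrite /c; lia.
  + by rewrite c2 in cE; lia.
- have D_eq : D = p.-1.
    by have [[|[|m]] Dm] := dvdnP p_D1; move: Dm; rewrite ?mulSn; lia.
  subst D; split; last by right.
  have [[_ _ _ /andP[lo _]] _] := hU.
  have : ~ (E%:Z <= p%:Z - 2).
    move=> le_Ep2; have : p%:Z * E%:Z <= p%:Z * (p%:Z - 2) by rewrite ler_pM2l; lia.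
    lia.
  lia.
Qed.

Lemma dvdz_2_pred_prime p : prime p -> p != 2%N -> (2 %| p%:Z - 1)%Z.
Proof.
move=> p_pr p_neq2; have [/eqP p_eq2 | p_odd] := even_prime p_pr.
  by rewrite p_eq2 in p_neq2.
have p_gt0 := prime_gt0 p_pr; have -> : p%:Z - 1 = (p.-1)%N by lia.
by rewrite dvdzE /= dvdn2 -oddS prednK.
Qed.

Lemma inBplus_inU p r e d : prime p -> inBplus p r e d -> inU p r e d.
Proof.
move=> p_pr [/andP[r_ge2 le_rp] -> ->]; have p_gt1 := prime_gt1 p_pr.
apply: (inU_intro (g := p%:Z - 1)).
- by split; lia.
- lia.
- exact: dvdz_2_pred_prime.
- ring.
Qed.

Lemma inB0_inU p r e d : prime p -> inB0 p r e d -> inU p r e d.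
Proof.
move=> p_pr [/andP[r_ge2 le_rp1] lt_p1e le_ep1 le_r ->]; have p_gt1 := prime_gt1 p_pr.
apply: (inU_intro (g := 2 * e - (p%:Z - 1))).
- split; [lia | lia | lia | apply/andP; split; first lia].
  by rewrite ler_pM2l; lia.
- lia.
- by move=> p_neq2; apply: rpredB; [apply/dvdz_mulr/dvdzz | exact: dvdz_2_pred_prime].
- ring.
Qed.

Lemma inBminus_dvd p r e d : inBminus p r e d -> (r %| p%:Z - 1)%Z.
Proof. by case=> _ _ _ <- _; apply/dvdz_mulr/dvdzz. Qed.

Lemma inBminus_le p r e d : (1 < p)%N -> inBminus p r e d -> r <= p%:Z - 1.
Proof.
move=> p_gt1 [r_ge2 _ _ rE _]; have r_gt0 : 0 < r by lia.
have f_gt0 : 0 < p%:Z - 1 - e by rewrite -(pmulr_rgt0 _ r_gt0) rE; lia.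
by rewrite -[X in _ <= X]rE ler_peMr; lia.
Qed.

Lemma inB0_e_eq p r e d : p%:Z <= r -> inB0 p r e d -> e = p%:Z - 1.
Proof.
move=> le_pr [/andP[r_ge2 _] _ le_ep1 le_r _].
have : r * (p%:Z - 1 - e) < r * 1 by lia.
by rewrite ltr_pM2l; lia.
Qed.

Lemma dvdz_lt_double_eq p (r : int) : (0 < p)%N -> (p%:Z %| r)%Z -> 0 < r < 2 * p%:Z -> r = p.
Proof.
move=> p_gt0 /dvdzP[m ->]; have p_gt0' : 0 < p%:Z by lia.
rewrite pmulr_lgt0 // ltr_pM2r // => /andP[m_gt0 lt_m2].
have -> : m = 1 by lia.
by rewrite mul1r.
Qed.

Lemma nonsingular_XrX1_dvd p : prime p -> forall r e d : int,
  (inU p r e d /\ (p%:Z %| r)%Z /\ \det (Mmat (polyXrX1 p r) `|e| `|d|) != 0) <->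
  (inB p r e d /\ (p%:Z %| r)%Z).
Proof.
move=> p_pr r e d; have p_gt1 := prime_gt1 p_pr; have p_gt0 := ltnW p_gt1; split.
  case=> /[dup] hU /(inU_nat p_gt1) [R [E [D [rR eE dD [R_gt1 /andP[_ le_Ep1] D_in _]]]]].
  subst r e d; rewrite /polyXrX1 /= => -[p_R det_nz]; split=> //.
  have R_eq : R = p.
    suff lt_R2p : (R < 2 * p)%N.
      have R_range : 0 < R%:Z < 2 * p%:Z by lia.
      by case: (dvdz_lt_double_eq p_gt0 p_R R_range).
    rewrite ltnNge; apply/negP => le_2pR; have [D1 | D_neq1] := eqVneq D 1%N.
      by move: hU; rewrite D1 => /(inU_d1 p_gt1); lia.
    have : \det (Mmat ('X^R - 'X - 1 : {poly 'F_p}) E D) = 0.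
      by apply: det_Mmat_XrX1_eq0; lia.
    by move=> det0; rewrite det0 eqxx in det_nz.
  subst R; have [-> [-> | ->]] := inU_r_eq_p p_pr hU; [left | right; left]; split; lia.
case=> -[hB | [hB | hB]] p_r.
- have [/andP[r_ge2 le_rp] e_eq d_eq] := hB.
  have r_eq : r = p by apply: dvdz_lt_double_eq; lia.
  split; first exact: inBplus_inU.
  split=> //; rewrite /polyXrX1 d_eq r_eq e_eq /= (_ : `|p%:Z - 1|%N = p.-1); last lia.
  exact: det_Mmat_XpX1_neq0.
- have [/andP[r_ge2 le_rp1] _ _ _ d_eq] := hB.
  have r_eq : r = p by apply: dvdz_lt_double_eq; lia.
  have e_eq : e = p%:Z - 1 by apply: (inB0_e_eq _ hB); lia.
  split; first exact: inB0_inU.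
  split=> //; rewrite /polyXrX1 d_eq r_eq e_eq /= (_ : `|p%:Z - 1|%N = p.-1); last lia.
  by apply: det_Mmat_XpX1_neq0; lia.
- have r_le := inBminus_le p_gt1 hB; have [r_ge2 _ _ _ _] := hB.
  have r_range : 0 < r < 2 * p%:Z by lia.
  by have := dvdz_lt_double_eq p_gt0 p_r r_range; lia.
Qed.

Lemma nonsingular_Xr1_gt p : prime p -> forall r e d : int,
  (inU p r e d /\ p%:Z < r /\ ~~ (p%:Z %| r)%Z
   /\ \det (Mmat (polyXr1 p r) `|e| `|d|) != 0) <->
  (inB p r e d /\ p%:Z < r /\ ~~ (p%:Z %| r)%Z).
Proof.
move=> p_pr r e d; have p_gt1 := prime_gt1 p_pr; have p_gt0 := ltnW p_gt1; split.
  case=> /(inU_nat p_gt1) [R [E [D [-> -> -> [R_gt1 /andP[_ le_Ep1] D_in le_DR]]]]].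
  rewrite /polyXr1 /= => -[lt_pR [p_nR det_nz]].
  have co_pR : coprime p R by rewrite prime_coprime.
  have lt_Ep : (E < p)%N by lia.
  have hits := (det_Mmat_Xr1_neq0 p_pr (ltnW R_gt1) lt_Ep le_DR co_pR).1 det_nz.
  have [D_eq R_eq E_eq] := window_hits_gt p_gt1 lt_pR D_in le_Ep1 hits.
  by subst; split=> //; right; left; split; lia.
case=> -[hB | [hB | hB]] [lt_pr p_nr]; last by have := inBminus_le p_gt1 hB; lia.
  by have [/andP[_ le_rp] _ _] := hB; lia.
have [/andP[_ le_rp1] _ _ _ d_eq] := hB.
have r_eq : r = p.+1 by lia.
have e_eq : e = p.-1 by rewrite (inB0_e_eq _ hB); lia.
split; first exact: inB0_inU.
split=> //; split=> //; rewrite /polyXr1 d_eq r_eq e_eq /=.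
have co_pp1 : coprime p p.+1 := coprimenS p.
apply/(det_Mmat_Xr1_neq0 p_pr _ _ _ co_pp1); [lia | lia | lia |].
apply: (window_hits_coprime co_pp1 p_gt0); first lia.
by rewrite subn1 /= prednK // leq_mul2r leqnSn orbT.
Qed.

Lemma nonsingular_Xr1_lt p : prime p -> forall r e d : int,
  (inU p r e d /\ 2 <= r <= p%:Z - 1 /\ ~~ (r %| p%:Z - 1)%Z
   /\ \det (Mmat (polyXr1 p r) `|e| `|d|) != 0) <->
  (inB p r e d /\ 2 <= r <= p%:Z - 1 /\ ~~ (r %| p%:Z - 1)%Z).
Proof.
move=> p_pr r e d; have p_gt1 := prime_gt1 p_pr; have p_gt0 := ltnW p_gt1.
have p1E : p%:Z - 1 = p.-1 by lia.
split.
  case=> /[dup] hU /(inU_nat p_gt1) [R [E [D [rR eE dD [_ /andP[_ le_Ep1] D_in le_DR]]]]].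
  subst r e d; rewrite /polyXr1 /= => -[R_range [R_ndvd det_nz]]; split=> //.
  have R_in : (1 < R < p)%N by lia.
  have R_gt0 : (0 < R)%N by lia.
  have lt_Ep : (E < p)%N by lia.
  have co_pR : coprime p R by rewrite prime_coprime // gtnNdvd //; lia.
  have hits := (det_Mmat_Xr1_neq0 p_pr R_gt0 lt_Ep le_DR co_pR).1 det_nz.
  have D_inR : (0 < D <= R)%N by lia.
  rewrite p1E in R_ndvd.
  have [[D_eq E_eq] | [D_eq le_R]] := window_hits_lt p_pr R_in R_ndvd D_inR le_Ep1 hits.
    by left; split; lia.
  rewrite (_ : D%:Z = R%:Z - 1) in hU; last lia.
  have := inU_pred_r hU; move: le_R; rewrite mulnBr -!subn1 mulnBr muln1.
  by right; left; split; lia.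
case=> hB [r_range r_ndvd].
have [R rR] : exists R : nat, r = R by exists `|r|%N; lia.
subst r; have co_pR : coprime p R by rewrite prime_coprime // gtnNdvd //; lia.
case: hB => [hB | [hB | /inBminus_dvd R_dvd]]; last by rewrite R_dvd in r_ndvd.
- have [_ e_eq d_eq] := hB; split; first exact: inBplus_inU.
  split=> //; split=> //; rewrite /polyXr1 e_eq d_eq p1E /=.
  apply/(det_Mmat_Xr1_neq0 p_pr _ _ _ co_pR); [lia | lia | lia |].
  by apply: (window_hits_coprime co_pR p_gt0); rewrite ?prednK ?leqnn ?leqnSn.
- have [_ lt_p1e le_ep1 le_r d_eq] := hB.
  have [E eE] : exists E : nat, e = E by exists `|e|%N; lia.
  subst e; split; first exact: inB0_inU.
  split=> //; split=> //; rewrite /polyXr1 d_eq /= (_ : `|R%:Z - 1|%N = R.-1); last lia.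
  apply/(det_Mmat_Xr1_neq0 p_pr _ _ _ co_pR); [lia | lia | lia |].
  apply: (window_hits_coprime co_pR p_gt0); first lia.
  by rewrite -subn1 mulnBl mul1n mulnS; lia.
Qed.

Theorem lemma6 (p : nat) (hp : prime p) :
  (forall r e d : int,
     (inU p r e d /\ (p%:Z %| r)%Z
      /\ \det (Mmat (polyXrX1 p r) (absz e) (absz d)) != 0)
     <-> (inB p r e d /\ (p%:Z %| r)%Z))
  /\
  (forall r e d : int,
     (inU p r e d /\ p%:Z < r /\ ~~ (p%:Z %| r)%Z
      /\ \det (Mmat (polyXr1 p r) (absz e) (absz d)) != 0)
     <-> (inB p r e d /\ p%:Z < r /\ ~~ (p%:Z %| r)%Z))
  /\
  (forall r e d : int,
     (inU p r e d /\ 2 <= r <= p%:Z - 1 /\ ~~ (r %| p%:Z - 1)%Z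
      /\ \det (Mmat (polyXr1 p r) (absz e) (absz d)) != 0)
     <-> (inB p r e d /\ 2 <= r <= p%:Z - 1 /\ ~~ (r %| p%:Z - 1)%Z)).
Proof.
split; first exact: nonsingular_XrX1_dvd.
by split; [exact: nonsingular_Xr1_gt | exact: nonsingular_Xr1_lt].
Qed.
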